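(* Let $\mathscr{R}$ be a von Neumann algebra acting on a Hilbert space $\mathscr{H}$ and let $\mathscr{I}$ be a left ideal of $\mathscr{R}$. Then there is a left ideal $\mathscr{J}$ of $\mathcal{B}(\mathscr{H})$ such that $\mathscr{I} = \mathscr{J}\cap\mathscr{R}$.
   Context: Left ideals are not assumed to be closed in any topology. *)

From HB Require Import structures.
From mathcomp Require Import all_boot all_order all_algebra.
From mathcomp Require Import complex.
From mathcomp Require Import reals.
Set Implicit Arguments. Unset Strict Implicit. Unset Printing Implicit Defensive.
Import Order.TTheory GRing.Theory Num.Theory.
Local Open Scope ring_scope.
Local Open Scope complex_scope.

Section Hilbert.
Variable R : realType.
Variable H : lmodType R[i].
Variable ip : H -> H -> R[i].   (* inner product, linear in the 1st argument *)

Definition hnorm (x : H) : R := Num.sqrt (complex.Re (ip x x)).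

Definition is_inner_product : Prop :=
  [/\ forall (a : R[i]) (x y z : H), ip (a *: x + y) z = a * ip x z + ip y z,
      forall x y : H, ip y x = (ip x y)^*,
      forall x : H, 0 <= ip x x
    & forall x : H, ip x x = 0 -> x = 0].

Definition is_complete : Prop :=
  forall u : nat -> H,
    (forall e : R, 0 < e -> exists N : nat, forall m n : nat,
        (N <= m)%N -> (N <= n)%N -> hnorm (u m - u n) < e) ->
    exists x : H, forall e : R, 0 < e -> exists N : nat, forall n : nat,
        (N <= n)%N -> hnorm (u n - x) < e.

Definition hilbert_space : Prop := is_inner_product /\ is_complete.

Definition bounded_op (T : H -> H) : Prop :=
  (forall (a : R[i]) (x y : H), T (a *: x + y) = a *: T x + T y) /\
  exists M : R, forall x : H, hnorm (T x) <= M * hnorm x.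

Definition opadd (S T : H -> H) : H -> H := fun x => S x + T x.
Definition opscale (a : R[i]) (T : H -> H) : H -> H := fun x => a *: T x.
Definition opopp (T : H -> H) : H -> H := fun x => - T x.
Definition opzero : H -> H := fun _ => 0.

Definition is_adjoint (T S : H -> H) : Prop :=
  forall x y : H, ip (T x) y = ip x (S y).

Definition commutant (A : (H -> H) -> Prop) : (H -> H) -> Prop :=
  fun T => bounded_op T /\ forall S, A S -> T \o S = S \o T.

Definition von_neumann_algebra (A : (H -> H) -> Prop) : Prop :=
  (forall T, A T -> bounded_op T) /\
  A id /\
  (forall S T, A S -> A T -> A (opadd S T)) /\
  (forall a T, A T -> A (opscale a T)) /\
  (forall S T, A S -> A T -> A (S \o T)) /\
  (forall T, A T -> exists2 S, A S & is_adjoint T S) /\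
  (forall T, A T <-> commutant (commutant A) T).

(* left ideal I of the operator algebra A (no closedness assumed) *)
Definition left_ideal (A I : (H -> H) -> Prop) : Prop :=
  [/\ forall T, I T -> A T,
      I opzero,
      forall S T, I S -> I T -> I (opadd S T),
      forall T, I T -> I (opopp T)
    & forall S T, A S -> I T -> I (S \o T)].

End Hilbert.

From mathcomp Require Import all_boot all_order all_algebra.
From mathcomp Require Import complex.
From mathcomp Require Import reals boolp classical_sets.
From mathcomp Require Import ring lra.
Set Implicit Arguments. Unset Strict Implicit. Unset Printing Implicit Defensive.
Import Order.TTheory GRing.Theory Num.Theory.
Local Open Scope ring_scope.
Local Open Scope complex_scope.

(* Take for J the left ideal of B(H) generated by I.  If T = \sum_k S_k T_k
   (S_k bounded, T_k in I) lies in the algebra, let P be the orthogonal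
   projection of H^n onto the closure of the range of x |-> (T_k x)_k and put
   W_k h := \sum_j S_j (P (h e_k))_j.  As P fixes (T_j x)_j, T = \sum_k W_k T_k.
   An operator U commuting with T, the T_k and their adjoints acts diagonally on
   H^n preserving that range and its orthogonal complement (the kernel of the
   adjoint row operator), so it commutes with P; and (y_j)_j |-> \sum_j S_j y_j
   intertwines U on the range, where it is given by T, hence on its closure.
   So each W_k lies in the double commutant, i.e. in the algebra, and T is in I.
   The projection comes from the closest-point property in a Hilbert space. *)

Section RealFacts.
Variable R : realType.

Lemma le0_of_le_mul_eps (r h : R) :
  0 <= h -> (forall e, 0 < e -> r <= e * h) -> r <= 0.
Proof.
move=> h0 hr; apply/ler_addgt0Pr => e e0; rewrite add0r.
have h1 : 0 < h + 1 by lra.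
apply: (le_trans (hr (e / (h + 1)) (divr_gt0 e0 h1))).
rewrite mulrAC ler_pdivrMr // ler_pM2l //; lra.
Qed.

Lemma ltr_pM_divD1 (M e : R) : 0 <= M -> 0 < e -> M * (e / (M + 1)) < e.
Proof. by move=> M0 e0; rewrite mulrCA gtr_pMr // ltr_pdivrMr; lra. Qed.

Lemma quadratic_ge0_discr (p q r : R) : 0 <= p -> 0 <= q ->
  (forall t, 0 <= p + 2 * t * r + t ^+ 2 * q) -> r ^+ 2 <= p * q.
Proof.
move=> p0 q0 h.
have [qz|qn0] := eqVneq q 0.
  have [rz|rn0] := eqVneq r 0; first by rewrite rz qz; nra.
  have := h (- (p + 1) / (2 * r)); rewrite qz mulr0 addr0.
  have -> : 2 * (- (p + 1) / (2 * r)) * r = - (p + 1).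
    by field; rewrite rn0.
  lra.
have qpos : 0 < q by rewrite lt_def qn0.
have := h (- r / q).
have -> : p + 2 * (- r / q) * r + (- r / q) ^+ 2 * q = p - r ^+ 2 / q by field.
by rewrite subr_ge0 ler_pdivrMr // mulrC.
Qed.

Lemma invS_lt_eventually (e : R) :
  0 < e -> exists N : nat, forall j, (N <= j)%N -> j.+1%:R^-1 < e.
Proof.
move=> e0; have [k hk] := ltr_add_invr e0; exists k => j hj.
rewrite add0r in hk; apply: le_lt_trans hk.
by rewrite lef_pV2 ?posrE ?ltr0Sn // ler_nat.
Qed.

End RealFacts.

Section LinearMaps.
Variables (R : pzRingType) (U : lmodType R) (V : zmodType).
Variables (s : GRing.Scale.law R V) (f : U -> V).
Hypothesis lin_f : linear_for s f.

Lemma linB : {morph f : x y / x - y}.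
Proof. exact: zmod_morphism_linear. Qed.
Lemma lin0 : f 0 = 0.
Proof. by rewrite -(subrr (0 : U)) linB subrr. Qed.
Lemma linN : {morph f : x / - x}.
Proof. by move=> x; rewrite -[in LHS]sub0r linB lin0 sub0r. Qed.
Lemma linD : {morph f : x y / x + y}.
Proof. by move=> x y; rewrite -[in LHS](opprK y) linB linN opprK. Qed.
Lemma linZ : scalable_for s f.
Proof. exact: scalable_linear. Qed.
Lemma lin_sum (I : Type) (r : seq I) (P : pred I) (F : I -> U) :
  f (\sum_(i <- r | P i) F i) = \sum_(i <- r | P i) f (F i).
Proof. by elim/big_rec2: _ => [|i x y _ <-]; rewrite ?lin0 ?linD. Qed.

End LinearMaps.

Section InnerProductSpace.
Variables (R : realType) (V : lmodType R[i]) (ip : V -> V -> R[i]).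
Hypothesis hip : is_inner_product ip.

Lemma ip_scalar z : scalar (ip^~ z).
Proof. by case: hip => h *; move=> a x y; exact: h. Qed.
Lemma ipC x y : ip y x = (ip x y)^*.
Proof. by case: hip. Qed.

Lemma ipBl z : {morph ip^~ z : x y / x - y}.
Proof. exact: linB (ip_scalar z). Qed.
Lemma ipDl z : {morph ip^~ z : x y / x + y}.
Proof. exact: linD (ip_scalar z). Qed.
Lemma ipZl a x z : ip (a *: x) z = a * ip x z.
Proof. exact: (linZ (ip_scalar z) a x). Qed.
Lemma ip0l z : ip 0 z = 0.
Proof. exact: lin0 (ip_scalar z). Qed.
Lemma ipDr x y z : ip z (x + y) = ip z x + ip z y.
Proof. by rewrite [LHS]ipC [ip z x]ipC [ip z y]ipC ipDl rmorphD. Qed.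
Lemma ipBr x y z : ip z (x - y) = ip z x - ip z y.
Proof. by rewrite [LHS]ipC [ip z x]ipC [ip z y]ipC ipBl rmorphB. Qed.
Lemma ipZr a x z : ip z (a *: x) = a^* * ip z x.
Proof. by rewrite [LHS]ipC [ip z x]ipC ipZl rmorphM. Qed.
Lemma ip0r z : ip z 0 = 0.
Proof. by rewrite ipC ip0l conjc0. Qed.
Lemma ip_sumr (I : Type) (r : seq I) (F : I -> V) z :
  ip z (\sum_(i <- r) F i) = \sum_(i <- r) ip z (F i).
Proof. by elim/big_rec2: _ => [|i x y _ <-]; rewrite ?ip0r ?ipDr. Qed.

Definition norm2 x : R := complex.Re (ip x x).

Lemma ipxx x : ip x x = (norm2 x)%:C.
Proof.
have : 0 <= ip x x by case: hip.
by rewrite /norm2; case: (ip x x) => a b /ger0_Im /= ->.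
Qed.
Lemma norm2_ge0 x : 0 <= norm2 x.
Proof. by case: hip => _ _ /(_ x); rewrite ipxx lecR. Qed.
Lemma norm2_eq0 x : norm2 x = 0 -> x = 0.
Proof. by case: hip => _ _ _ h hx; apply: h; rewrite ipxx hx. Qed.

Lemma norm2D x y : norm2 (x + y) = norm2 x + norm2 y + 2 * complex.Re (ip x y).
Proof.
rewrite /norm2 ipDl !ipDr !raddfD /= [ip y x]ipC.
by case: (ip x y) => a b /=; lra.
Qed.
Lemma norm2B x y : norm2 (x - y) = norm2 x + norm2 y - 2 * complex.Re (ip x y).
Proof.
rewrite /norm2 ipBl !ipBr !raddfB /= [ip y x]ipC.
by case: (ip x y) => a b /=; lra.
Qed.
Lemma parallelogram x y : norm2 (x + y) + norm2 (x - y) = 2 * norm2 x + 2 * norm2 y.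
Proof. by rewrite norm2D norm2B; lra. Qed.

Lemma norm2Z a x :
  norm2 (a *: x) = (complex.Re a ^+ 2 + complex.Im a ^+ 2) * norm2 x.
Proof. by rewrite /norm2 ipZl ipZr ipxx; case: a => a b /=; lra. Qed.

Lemma norm2N x : norm2 (- x) = norm2 x.
Proof. by rewrite -scaleN1r norm2Z /=; lra. Qed.

Lemma Re_ipZr (t : R) x y : complex.Re (ip x (t%:C *: y)) = t * complex.Re (ip x y).
Proof. by rewrite ipZr; case: (ip x y) => a b /=; ring. Qed.

Lemma Cauchy_Schwarz x y : complex.Re (ip x y) ^+ 2 <= norm2 x * norm2 y.
Proof.
apply: quadratic_ge0_discr; rewrite ?norm2_ge0 // => t.
by have := norm2_ge0 (x + t%:C *: y); rewrite norm2D norm2Z Re_ipZr /=; lra.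
Qed.

Lemma hnormE x : hnorm ip x = Num.sqrt (norm2 x).
Proof. by []. Qed.
Lemma hnorm_ge0 x : 0 <= hnorm ip x.
Proof. exact: sqrtr_ge0. Qed.
Lemma hnorm_sqr x : hnorm ip x ^+ 2 = norm2 x.
Proof. by rewrite sqr_sqrtr // norm2_ge0. Qed.
Lemma hnorm_eq0 x : hnorm ip x = 0 -> x = 0.
Proof. by move=> h; apply: norm2_eq0; rewrite -hnorm_sqr h expr0n. Qed.
Lemma hnorm0 : hnorm ip 0 = 0.
Proof. by rewrite hnormE /norm2 ip0l sqrtr0. Qed.
Lemma hnormZ a x :
  hnorm ip (a *: x) = Num.sqrt (complex.Re a ^+ 2 + complex.Im a ^+ 2) * hnorm ip x.
Proof. by rewrite !hnormE norm2Z sqrtrM // addr_ge0 // sqr_ge0. Qed.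
Lemma hnorm_opp x : hnorm ip (- x) = hnorm ip x.
Proof. by rewrite !hnormE norm2N. Qed.

Lemma ler_norm_Re_ip x y : `|complex.Re (ip x y)| <= hnorm ip x * hnorm ip y.
Proof. by rewrite -sqrtr_sqr -sqrtrM ?norm2_ge0 // ler_wsqrtr // Cauchy_Schwarz. Qed.

Lemma ler_hnormD x y : hnorm ip (x + y) <= hnorm ip x + hnorm ip y.
Proof.
rewrite hnormE -[hnorm ip x + _]ger0_norm ?addr_ge0 ?hnorm_ge0 // -sqrtr_sqr.
rewrite ler_wsqrtr // norm2D sqrrD -!hnorm_sqr.
by have := le_trans (ler_norm _) (ler_norm_Re_ip x y); lra.
Qed.
Lemma ler_hnormB x y : hnorm ip (x - y) <= hnorm ip x + hnorm ip y.
Proof. by rewrite -(hnorm_opp y) ler_hnormD. Qed.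
Lemma ler_hdistD x y z : hnorm ip (x - z) <= hnorm ip (x - y) + hnorm ip (y - z).
Proof. by apply: le_trans (ler_hnormD _ _); rewrite addrA subrK. Qed.
Lemma ler_hnorm_sum n (F : 'I_n -> V) :
  hnorm ip (\sum_k F k) <= \sum_k hnorm ip (F k).
Proof.
elim/big_rec2: _ => [|i x y _ h]; first by rewrite hnorm0.
by apply: le_trans (ler_hnormD _ _) _; rewrite lerD2l.
Qed.

Lemma hnorm_lt x (e : R) : 0 < e -> (hnorm ip x < e) = (norm2 x < e ^+ 2).
Proof.
by move=> e0; rewrite hnormE -(@ltr_sqrt _ _ (e ^+ 2)) ?exprn_gt0 // sqrtr_sqr gtr0_norm.
Qed.

End InnerProductSpace.

Section BoundedMaps.
Variables (R : realType) (U V : lmodType R[i]).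
Variables (ipU : U -> U -> R[i]) (ipV : V -> V -> R[i]).

Definition bounded_map (f : U -> V) :=
  exists2 M : R, 0 <= M & forall x, hnorm ipV (f x) <= M * hnorm ipU x.

Lemma bounded_mapB (f : U -> V) : linear f -> bounded_map f ->
  exists2 M : R, 0 <= M & forall x y, hnorm ipV (f x - f y) <= M * hnorm ipU (x - y).
Proof. by move=> lin_f [M M0 hM]; exists M => // x y; rewrite -(linB lin_f). Qed.

End BoundedMaps.

Lemma bounded_opP (R : realType) (H : lmodType R[i]) (ip : H -> H -> R[i]) T :
  bounded_op ip T <-> linear T /\ bounded_map ip ip T.
Proof.
split=> [[lin_T [M hM]]|[lin_T [M _ hM]]]; last by split=> //; exists M.
split=> //; exists (Num.max M 0) => [|x]; first by rewrite le_max lexx orbT.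
apply: le_trans (hM x) _; apply: ler_wpM2r; first exact: sqrtr_ge0.
by rewrite le_max lexx.
Qed.

Lemma bounded_map_comp (R : realType) (U V W : lmodType R[i])
    (ipU : U -> U -> R[i]) (ipV : V -> V -> R[i]) (ipW : W -> W -> R[i])
    (f : V -> W) (g : U -> V) :
  bounded_map ipV ipW f -> bounded_map ipU ipV g -> bounded_map ipU ipW (f \o g).
Proof.
move=> [Mf Mf0 hf] [Mg Mg0 hg]; exists (Mf * Mg) => [|x]; first exact: mulr_ge0.
by apply: le_trans (hf _) _; rewrite -mulrA ler_wpM2l.
Qed.

Lemma bounded_map_sum (R : realType) (U V : lmodType R[i])
    (ipU : U -> U -> R[i]) (ipV : V -> V -> R[i]) n (F : 'I_n -> U -> V) :
  is_inner_product ipV -> (forall k, bounded_map ipU ipV (F k)) ->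
  bounded_map ipU ipV (fun x => \sum_k F k x).
Proof.
move=> hipV bF.
have /choice [M hM] k : exists M, 0 <= M /\ forall x, hnorm ipV (F k x) <= M * hnorm ipU x.
  by case: (bF k) => M; exists M.
exists (\sum_k M k) => [|x]; first by apply: sumr_ge0 => k _; case: (hM k).
apply: le_trans (ler_hnorm_sum hipV _) _; rewrite mulr_suml.
by apply: ler_sum => k _; case: (hM k).
Qed.

Section Closure.
Variables (R : realType) (V : lmodType R[i]) (ip : V -> V -> R[i]).
Hypothesis hip : is_inner_product ip.

Definition subspace (M : V -> Prop) :=
  M 0 /\ forall a x y, M x -> M y -> M (a *: x + y).

Definition in_closure (M : V -> Prop) c :=
  forall e, 0 < e -> exists2 x, M x & hnorm ip (c - x) < e.

Definition orthogonal_to (M : V -> Prop) w := forall x, M x -> ip x w = 0.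

Lemma subspaceD M x y : subspace M -> M x -> M y -> M (x + y).
Proof. by case=> _ Mlin Mx My; rewrite -[x]scale1r; apply: Mlin. Qed.
Lemma subspaceZ M a x : subspace M -> M x -> M (a *: x).
Proof. by case=> M0 Mlin Mx; rewrite -[_ *: x]addr0; apply: Mlin. Qed.

Lemma subspaceB M x y : subspace M -> M x -> M y -> M (x - y).
Proof. by case=> _ Mlin Mx My; rewrite addrC -scaleN1r; apply: Mlin. Qed.

Lemma orthogonal_subspace M : subspace (orthogonal_to M).
Proof.
split=> [x _|a w1 w2 Mw1 Mw2 x Mx]; first exact: ip0r.
by rewrite ipDr // ipZr // Mw1 // Mw2 // mulr0 addr0.
Qed.

Variable M : V -> Prop.
Hypothesis subM : subspace M.

Lemma sub_in_closure x : M x -> in_closure M x.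
Proof. by move=> Mx e e0; exists x; rewrite // subrr hnorm0. Qed.

Lemma closure_subspace : subspace (in_closure M).
Proof.
split=> [|a c1 c2 c1M c2M e e0]; first by apply: sub_in_closure; case: subM.
set s := Num.sqrt (complex.Re a ^+ 2 + complex.Im a ^+ 2).
have s0 : 0 <= s := sqrtr_ge0 _.
have [x1 Mx1 hx1] := c1M (e / (2 * (s + 1))) ltac:(rewrite divr_gt0 // mulr_gt0 //; lra).
have [x2 Mx2 hx2] := c2M (e / 2) ltac:(rewrite divr_gt0 //).
exists (a *: x1 + x2); first by case: subM => _; apply.
have -> : a *: c1 + c2 - (a *: x1 + x2) = a *: (c1 - x1) + (c2 - x2).
  by rewrite scalerBr opprD addrACA.
apply: (le_lt_trans (ler_hnormD hip _ _)); rewrite hnormZ // -/s.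
have : s * hnorm ip (c1 - x1) <= s * (e / (2 * (s + 1))).
  by rewrite ler_wpM2l // ltW.
have : s * (e / (2 * (s + 1))) <= e / 2.
  by rewrite mulrCA ler_pM2l ?divr_gt0 // ler_pdivrMr ?mulr_gt0 //; lra.
lra.
Qed.

Lemma orthogonal_closure w c : orthogonal_to M w -> in_closure M c -> ip c w = 0.
Proof.
move=> Mw.
have Re0 c' : in_closure M c' -> complex.Re (ip c' w) = 0.
  move=> c'M; apply/eqP; rewrite -normr_le0.
  apply: (le0_of_le_mul_eps (hnorm_ge0 ip w)) => e e0; have [x Mx hx] := c'M e e0.
  have -> : ip c' w = ip (c' - x) w by rewrite ipBl // (Mw x Mx) subr0.
  by apply: le_trans (ler_norm_Re_ip hip _ _) _; rewrite ler_wpM2r ?hnorm_ge0 ?ltW.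
move=> cM; have := Re0 _ (subspaceZ 'i closure_subspace cM); rewrite ipZl // mulrC ReiNIm.
by have := Re0 _ cM; case: (ip c w) => a b /= -> /eqP; rewrite oppr_eq0 => /eqP ->.
Qed.

Lemma closure_orthogonal_eq0 c : in_closure M c -> orthogonal_to M c -> c = 0.
Proof.
by move=> cM Mc; apply: (norm2_eq0 hip); rewrite /norm2 (orthogonal_closure Mc cM).
Qed.

End Closure.

Section BoundedClosure.
Variables (R : realType) (U V : lmodType R[i]).
Variables (ipU : U -> U -> R[i]) (ipV : V -> V -> R[i]).
Hypothesis hipV : is_inner_product ipV.
Variable M : U -> Prop.

Lemma in_closure_image (N : V -> Prop) f c :
  linear f -> bounded_map ipU ipV f -> (forall x, M x -> N (f x)) ->
  in_closure ipU M c -> in_closure ipV N (f c).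
Proof.
move=> lin_f /(bounded_mapB lin_f) [Mf Mf0 hf] MN cM e e0.
have [x Mx hx] := cM (e / (Mf + 1)) ltac:(rewrite divr_gt0 //; lra).
exists (f x); first exact: MN.
apply: le_lt_trans (hf c x) _; apply: le_lt_trans (ltr_pM_divD1 Mf0 e0).
by rewrite ler_wpM2l // ltW.
Qed.

Lemma eq_on_closure f g c : linear f -> linear g ->
  bounded_map ipU ipV f -> bounded_map ipU ipV g ->
  (forall x, M x -> f x = g x) -> in_closure ipU M c -> f c = g c.
Proof.
move=> lin_f lin_g /(bounded_mapB lin_f) [Mf Mf0 hf] /(bounded_mapB lin_g) [Mg Mg0 hg].
move=> fg cM; apply/eqP; rewrite -subr_eq0; apply/eqP/(hnorm_eq0 hipV).
apply/eqP; rewrite eq_le hnorm_ge0 andbT.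
apply: (le0_of_le_mul_eps (addr_ge0 Mf0 Mg0)) => e e0.
have [x Mx hx] := cM e e0.
have -> : f c - g c = (f c - f x) - (g c - g x) by rewrite (fg x Mx) opprB addrA subrK.
apply: le_trans (ler_hnormB hipV _ _) _; rewrite mulrDr.
by apply: lerD; [apply: le_trans (hf c x) _ | apply: le_trans (hg c x) _];
  rewrite mulrC ler_wpM2r // ltW.
Qed.

End BoundedClosure.

Section Projection.
Variables (R : realType) (V : lmodType R[i]) (ip : V -> V -> R[i]).
Hypotheses (hip : is_inner_product ip) (hc : is_complete ip).
Variable M : V -> Prop.
Hypothesis subM : subspace M.

Definition dist2 y := inf [set norm2 ip (y - x) | x in M].

Lemma dist2_le y x : M x -> dist2 y <= norm2 ip (y - x).
Proof.
move=> Mx; apply: ge_inf; last by exists x.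
by exists 0 => _ [z _ <-]; exact: norm2_ge0.
Qed.

Lemma dist2_approx y (e : R) : 0 < e -> exists2 x, M x & norm2 ip (y - x) < dist2 y + e.
Proof.
move=> e0; have hinf : has_inf [set norm2 ip (y - x) | x in M].
  split; first by exists (norm2 ip (y - 0)), 0; case: subM.
  by exists 0 => _ [z _ <-]; exact: norm2_ge0.
by have [_ [x Mx <-] hx] := inf_adherent e0 hinf; exists x.
Qed.

Lemma dist2_midpoint y a b : M a -> M b ->
  norm2 ip (a - b) <= 2 * (norm2 ip (y - a) - dist2 y) + 2 * (norm2 ip (y - b) - dist2 y).
Proof.
move=> Ma Mb; set w := y - 2^-1 *: (a + b).
have dw : dist2 y <= norm2 ip w := dist2_le y (subspaceZ 2^-1 subM (subspaceD subM Ma Mb)).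
have ww : y - a + (y - b) = w + w.
  have half : (2^-1 + 2^-1 : R[i]) = 1 by field.
  by rewrite /w [RHS]addrACA -opprD -scalerDl half scale1r [LHS]addrACA opprD.
have ab : y - a - (y - b) = - (a - b) by rewrite opprB addrC addrA subrK opprB.
have := parallelogram hip (y - a) (y - b).
rewrite ww ab norm2N // (norm2D hip w w) -/(norm2 ip w).
lra.
Qed.

Lemma dist2_ge0 y : 0 <= dist2 y.
Proof.
apply: lb_le_inf; first by exists (norm2 ip (y - 0)), 0; case: subM.
by move=> _ [x _ <-]; exact: norm2_ge0.
Qed.

Lemma sqrt_dist2_le y c : in_closure ip M c -> Num.sqrt (dist2 y) <= hnorm ip (y - c).
Proof.
move=> cM; apply/ler_addgt0Pr => e e0; have [x Mx hx] := cM e e0.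
have : Num.sqrt (dist2 y) <= hnorm ip (y - x) by rewrite ler_wsqrtr // dist2_le.
have := ler_hdistD hip y c x; lra.
Qed.

Lemma closest_point y : exists2 m, in_closure ip M m &
  forall c, in_closure ip M c -> hnorm ip (y - m) <= hnorm ip (y - c).
Proof.
have approx j : exists x, M x /\ norm2 ip (y - x) < dist2 y + j.+1%:R^-1.
  have [x Mx hx] := dist2_approx y (e := j.+1%:R^-1) ltac:(by rewrite invr_gt0).
  by exists x.
have [xs Mxs] := choice approx.
have cauchy e : 0 < e -> exists N, forall j k, (N <= j)%N -> (N <= k)%N ->
    hnorm ip (xs j - xs k) < e.
  move=> e0; have [N hN] := invS_lt_eventually (e := e ^+ 2 / 4) ltac:(by rewrite divr_gt0 ?exprn_gt0).
  exists N => j k hj hk; rewrite hnorm_lt //.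
  have := dist2_midpoint y (Mxs j).1 (Mxs k).1.
  have := (Mxs j).2; have := (Mxs k).2; have := hN j hj; have := hN k hk.
  move: (j.+1%:R^-1) (k.+1%:R^-1) => a b; lra.
have [m lim_m] := hc cauchy.
have m_cl : in_closure ip M m.
  move=> e e0; have [N hN] := lim_m e e0; exists (xs N); first exact: (Mxs N).1.
  by rewrite -hnorm_opp // opprB hN.
exists m => // c c_cl; apply: le_trans (sqrt_dist2_le y c_cl).
apply/ler_addgt0Pr => e e0.
have [N1 hN1] := invS_lt_eventually (e := (e / 2) ^+ 2) ltac:(by rewrite exprn_gt0 ?divr_gt0).
have [N2 hN2] := lim_m (e / 2) ltac:(by rewrite divr_gt0).
set j := maxn N1 N2.
have close : hnorm ip (xs j - m) < e / 2 by apply: hN2; rewrite leq_maxr.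
have sd0 := sqrtr_ge0 (dist2 y).
have near : hnorm ip (y - xs j) < Num.sqrt (dist2 y) + e / 2.
  rewrite hnorm_lt; last lra.
  have := (Mxs j).2; have := hN1 j (leq_maxl _ _).
  rewrite sqrrD sqr_sqrtr ?dist2_ge0 //.
  have : 0 <= Num.sqrt (dist2 y) * (e / 2) by rewrite mulr_ge0 // divr_ge0 // ltW.
  rewrite mulr2n; move: j.+1%:R^-1 => a; lra.
have := ler_hdistD hip y (xs j) m; lra.
Qed.

Lemma closest_point_orthogonal y m : in_closure ip M m ->
    (forall c, in_closure ip M c -> hnorm ip (y - m) <= hnorm ip (y - c)) ->
  orthogonal_to ip M (y - m).
Proof.
move=> mM m_min.
have Re0 z : M z -> complex.Re (ip (y - m) z) = 0.
  move=> Mz; set w := y - m; set r := complex.Re (ip w z).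
  have le_t t : norm2 ip w <= norm2 ip (w - t%:C *: z).
    have c_cl : in_closure ip M (m + t%:C *: z).
      exact: subspaceD (closure_subspace hip subM) mM (sub_in_closure hip (subspaceZ _ subM Mz)).
    rewrite -!hnorm_sqr // lerXn2r ?nnegrE ?hnorm_ge0 //.
    by have := m_min _ c_cl; rewrite /w opprD addrA.
  have : (- r) ^+ 2 <= 0 * norm2 ip z.
    apply: quadratic_ge0_discr (lexx 0) (norm2_ge0 hip z) _ => t.
    by have := le_t t; rewrite (norm2B hip w) norm2Z // Re_ipZr //= -/r expr0n addr0; lra.
  rewrite mul0r sqrrN => r2_le0; apply/eqP; rewrite -sqrf_eq0 eq_le r2_le0.
  exact: sqr_ge0.
move=> z Mz; rewrite ipC //.
have := Re0 _ (subspaceZ 'i subM Mz); rewrite ipZr //.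
have := Re0 _ Mz; case: (ip (y - m) z) => a b /= -> hb.
by apply/eqP; rewrite eq_complex /= eqxx; apply/eqP; lra.
Qed.

Definition is_projection (P : V -> V) :=
  forall y, in_closure ip M (P y) /\ orthogonal_to ip M (y - P y).

Lemma projection_exists : exists P, is_projection P.
Proof.
have proj y : exists m, in_closure ip M m /\ orthogonal_to ip M (y - m).
  have [m mM m_min] := closest_point y.
  by exists m; split=> //; apply: closest_point_orthogonal.
by have [P hP] := choice proj; exists P.
Qed.

Variable P : V -> V.
Hypothesis hP : is_projection P.

Lemma projection_unique y m :
  in_closure ip M m -> orthogonal_to ip M (y - m) -> P y = m.
Proof.
move=> mM ym; apply/eqP; rewrite -subr_eq0; apply/eqP.
apply: (closure_orthogonal_eq0 hip subM).
  exact: subspaceB (closure_subspace hip subM) (hP y).1 mM.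
have -> : P y - m = (y - m) - (y - P y) by rewrite opprB [RHS]addrC addrA subrK.
exact: subspaceB (orthogonal_subspace hip M) ym (hP y).2.
Qed.

Lemma projection_linear : linear P.
Proof.
move=> a x y; apply: projection_unique.
  by case: (closure_subspace hip subM) => _; apply; [case: (hP x) | case: (hP y)].
have -> : a *: x + y - (a *: P x + P y) = a *: (x - P x) + (y - P y).
  by rewrite scalerBr opprD addrACA.
by case: (orthogonal_subspace hip M) => _; apply; [case: (hP x) | case: (hP y)].
Qed.

Lemma projection_id x : M x -> P x = x.
Proof.
move=> Mx; apply: projection_unique; first exact: sub_in_closure.
by rewrite subrr; case: (orthogonal_subspace hip M).
Qed.

Lemma projection_norm_le y : hnorm ip (P y) <= hnorm ip y.
Proof.
rewrite !hnormE ler_wsqrtr //.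
have := norm2D hip (P y) (y - P y).
rewrite [P y + _]addrC subrK (orthogonal_closure hip subM (hP y).2 (hP y).1) /=.
by have := norm2_ge0 hip (y - P y); lra.
Qed.

Lemma projection_bounded : bounded_map ip ip P.
Proof. by exists 1 => // y; rewrite mul1r projection_norm_le. Qed.

Lemma projection_comm (L : V -> V) : linear L -> bounded_map ip ip L ->
    (forall x, M x -> M (L x)) ->
    (forall w, orthogonal_to ip M w -> orthogonal_to ip M (L w)) ->
  forall y, P (L y) = L (P y).
Proof.
move=> lin_L bL LM Lorth y; apply: projection_unique.
  exact: in_closure_image lin_L bL LM (hP y).1.
by rewrite -(linB lin_L); apply: Lorth; case: (hP y).
Qed.

End Projection.

Section FiniteProduct.
Variables (R : realType) (V : lmodType R[i]) (ip : V -> V -> R[i]).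
Hypothesis hip : is_inner_product ip.
Variable n : nat.
Local Notation K := {ffun 'I_n -> V}.

Definition ip_ffun (f g : K) : R[i] := \sum_k ip (f k) (g k).

Lemma norm2_ffun (w : K) : norm2 ip_ffun w = \sum_k norm2 ip (w k).
Proof. exact: raddf_sum. Qed.

Lemma ip_ffun_inner : is_inner_product ip_ffun.
Proof.
split=> [a x y z|x y|x|x].
- rewrite /ip_ffun mulr_sumr -big_split; apply: eq_bigr => k _.
  by rewrite !ffunE (ip_scalar hip).
- by rewrite /ip_ffun rmorph_sum; apply: eq_bigr => k _; exact: ipC.
- by apply: sumr_ge0 => k _; case: hip.
move=> x0; apply/ffunP => k; rewrite ffunE; apply: (norm2_eq0 hip).
have /eqP : \sum_k norm2 ip (x k) = 0 by rewrite -norm2_ffun /norm2 x0.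
rewrite psumr_eq0 => [/allP/(_ k (mem_index_enum _))/eqP //|j _].
exact: norm2_ge0.
Qed.

Lemma hnorm_ffun_le (w : K) k : hnorm ip (w k) <= hnorm ip_ffun w.
Proof.
rewrite !hnormE ler_wsqrtr // norm2_ffun (bigD1 k) //= lerDl.
by apply: sumr_ge0 => j _; exact: norm2_ge0.
Qed.

Definition single k (h : V) : K := [ffun j => if j == k then h else 0].

Lemma single_linear k : linear (single k).
Proof.
move=> a x y; apply/ffunP => j; rewrite !ffunE.
by case: (j == k); rewrite ?scaler0 ?addr0.
Qed.

Lemma hnorm_single k h : hnorm ip_ffun (single k h) = hnorm ip h.
Proof.
rewrite !hnormE norm2_ffun (bigD1 k) //= big1 ?addr0 => [|j /negbTE jk].
  by rewrite ffunE eqxx.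
by rewrite ffunE jk /norm2 ip0l.
Qed.

Lemma single_bounded k : bounded_map ip ip_ffun (single k).
Proof. by exists 1 => // h; rewrite mul1r hnorm_single. Qed.

Lemma sum_single (w : K) : \sum_k single k (w k) = w.
Proof.
apply/ffunP => j; rewrite sum_ffunE (bigD1 j) //= big1 ?addr0 => [|k /negbTE kj].
  by rewrite ffunE eqxx.
by rewrite ffunE eq_sym kj.
Qed.

Lemma hnorm_ffun_le_sum (w : K) : hnorm ip_ffun w <= \sum_k hnorm ip (w k).
Proof.
rewrite -{1}(sum_single w).
under [X in _ <= X]eq_bigr => k _ do rewrite -(hnorm_single k).
exact: (ler_hnorm_sum ip_ffun_inner (fun k => single k (w k))).
Qed.

Lemma ip_ffun_complete : is_complete ip -> is_complete ip_ffun.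
Proof.
move=> hc u u_cauchy.
have lim_k k : exists l, forall e, 0 < e ->
    exists N, forall m, (N <= m)%N -> hnorm ip (u m k - l) < e.
  apply: hc => e /u_cauchy [N hN]; exists N => i j Ni Nj.
  apply: le_lt_trans (hN i j Ni Nj).
  by have := hnorm_ffun_le (u i - u j) k; rewrite !ffunE.
have [l hl] := choice lim_k.
exists [ffun k => l k] => e e0.
have e'0 : 0 < e / (n%:R + 1) by rewrite divr_gt0 // ltr_wpDl.
have [N hN] := choice (fun k => hl k _ e'0).
exists (\max_k N k)%N => m Nm.
apply: le_lt_trans (hnorm_ffun_le_sum _) _.
apply: (@le_lt_trans _ _ (\sum_(k < n) e / (n%:R + 1))).
  apply: ler_sum => k _; rewrite !ffunE; apply/ltW/hN.
  exact: leq_trans (leq_bigmax k) Nm.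
by rewrite sumr_const card_ord; have := ltr_pM_divD1 (ler0n R n) e0; rewrite mulr_natl.
Qed.

Definition diag_map (U : V -> V) (w : K) : K := [ffun k => U (w k)].

Lemma diag_map_linear U : linear U -> linear (diag_map U).
Proof. by move=> lin_U a x y; apply/ffunP => k; rewrite !ffunE lin_U. Qed.

Lemma diag_map_bounded U : bounded_map ip ip U -> bounded_map ip_ffun ip_ffun (diag_map U).
Proof.
move=> [M M0 hM]; exists M => // w.
rewrite !hnormE -(ger0_norm M0) -sqrtr_sqr -sqrtrM ?sqr_ge0 // ler_wsqrtr //.
rewrite !norm2_ffun mulr_sumr; apply: ler_sum => k _.
by rewrite ffunE -!(hnorm_sqr hip) -exprMn lerXn2r ?nnegrE ?mulr_ge0 ?hnorm_ge0.
Qed.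

Lemma diag_map_single U k h : linear U -> diag_map U (single k h) = single k (U h).
Proof.
move=> lin_U; apply/ffunP => j; rewrite !ffunE.
by case: (j == k); rewrite ?(lin0 lin_U).
Qed.

End FiniteProduct.

Section RowColumn.
Variables (R : realType) (H : lmodType R[i]) (ip : H -> H -> R[i]).
Hypothesis hip : is_inner_product ip.
Variable n : nat.
Variables (S Tk A : 'I_n -> H -> H).
Hypotheses (hS : forall k, bounded_op ip (S k)) (hTk : forall k, bounded_op ip (Tk k)).
Hypothesis hadj : forall k, is_adjoint ip (Tk k) (A k).
Variable T : H -> H.
Hypothesis T_def : forall x, T x = \sum_k S k (Tk k x).
Local Notation K := {ffun 'I_n -> H}.
Local Notation ipK := (@ip_ffun _ _ ip n).

Definition colT x : K := [ffun k => Tk k x].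
Definition row_op (F : 'I_n -> H -> H) (w : K) : H := \sum_k F k (w k).
Definition range_colT (w : K) := exists x, w = colT x.

Lemma colT_linear : linear colT.
Proof. by move=> a x y; apply/ffunP => k; rewrite !ffunE (hTk k).1. Qed.

Lemma row_op_linear F : (forall k, linear (F k)) -> linear (row_op F).
Proof.
move=> lin_F a x y; rewrite /row_op scaler_sumr -big_split; apply: eq_bigr => k _.
by rewrite !ffunE lin_F.
Qed.

Lemma row_op_bounded F : (forall k, bounded_map ip ip (F k)) -> bounded_map ipK ip (row_op F).
Proof.
move=> bF; apply: bounded_map_sum hip _ => k.
apply: (bounded_map_comp (g := fun w : K => w k)) (bF k) _.
by exists 1 => // w; rewrite mul1r hnorm_ffun_le.
Qed.

Lemma range_colT_subspace : subspace range_colT.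
Proof.
split; first by exists 0; apply/ffunP => k; rewrite !ffunE (lin0 (hTk k).1).
by move=> a _ _ [x ->] [y ->]; exists (a *: x + y); rewrite colT_linear.
Qed.

Lemma ip_colT x w : ipK (colT x) w = ip x (row_op A w).
Proof. by rewrite ip_sumr //; apply: eq_bigr => k _; rewrite ffunE hadj. Qed.

Lemma orthogonal_range_colTP w : orthogonal_to ipK range_colT w <-> row_op A w = 0.
Proof.
split=> [ortho|Aw0 _ [x ->]]; last by rewrite ip_colT Aw0 ip0r.
have := ortho _ (ex_intro _ (row_op A w) erefl); rewrite ip_colT.
by case: hip => _ _ _; apply.
Qed.

Lemma row_op_colT x : row_op S (colT x) = T x.
Proof. by rewrite T_def; apply: eq_bigr => k _; rewrite ffunE. Qed.

Let hipK : is_inner_product ipK := ip_ffun_inner hip n.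

Variable P : K -> K.
Hypothesis hP : is_projection ipK range_colT P.

Definition W k : H -> H := row_op S \o P \o single k.

Lemma W_bounded k : bounded_op ip (W k).
Proof.
apply/bounded_opP; split.
  move=> a x y; rewrite /W /= single_linear.
  rewrite (projection_linear hipK range_colT_subspace hP).
  by rewrite row_op_linear // => j; case: (hS j).
apply: bounded_map_comp; last exact: single_bounded.
apply: bounded_map_comp (projection_bounded hipK range_colT_subspace hP).
by apply: row_op_bounded => j; case/bounded_opP: (hS j).
Qed.

Lemma W_sum x : \sum_k W k (Tk k x) = T x.
Proof.
rewrite -(lin_sum (row_op_linear _)) => [|k]; last by case: (hS k).
rewrite -(lin_sum (projection_linear hipK range_colT_subspace hP)).
have -> : \sum_k single k (Tk k x) = colT x.
  by rewrite -[RHS]sum_single; apply: eq_bigr => k _; rewrite ffunE.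
by rewrite (projection_id hipK range_colT_subspace hP) ?row_op_colT //; exists x.
Qed.

Definition generators (X : H -> H) := X = T \/ exists k, X = Tk k \/ X = A k.

Lemma W_bicommutant k : commutant ip (commutant ip generators) (W k).
Proof.
split=> [|U [/bounded_opP [lin_U bU] commU]]; first exact: W_bounded.
have UT x : U (T x) = T (U x) by rewrite -[LHS]/((U \o T) x) commU //; left.
have UTk j x : U (Tk j x) = Tk j (U x).
  by rewrite -[LHS]/((U \o Tk j) x) commU //; right; exists j; left.
have UA j x : U (A j x) = A j (U x).
  by rewrite -[LHS]/((U \o A j) x) commU //; right; exists j; right.
have U_colT x : diag_map U (colT x) = colT (U x).
  by apply/ffunP => j; rewrite !ffunE UTk.
have U_rowA w : row_op A (diag_map U w) = U (row_op A w).
  by rewrite /row_op (lin_sum lin_U); apply: eq_bigr => j _; rewrite ffunE UA.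
have bUK := diag_map_bounded hip n bU.
have PU y : P (diag_map U y) = diag_map U (P y).
  apply: (projection_comm hipK range_colT_subspace hP (diag_map_linear lin_U) bUK).
    by move=> _ [x ->]; exists (U x).
  move=> w /orthogonal_range_colTP Aw0.
  by apply/orthogonal_range_colTP; rewrite U_rowA Aw0 (lin0 lin_U).
have SU c : in_closure ipK range_colT c -> row_op S (diag_map U c) = U (row_op S c).
  have lin_S : linear (row_op S) by apply: row_op_linear => j; case: (hS j).
  have bS : bounded_map ipK ip (row_op S).
    by apply: row_op_bounded => j; case/bounded_opP: (hS j).
  apply: (eq_on_closure hip (f := row_op S \o diag_map U) (g := U \o row_op S)).
  - by move=> a x y /=; rewrite diag_map_linear // lin_S.
  - by move=> a x y /=; rewrite lin_S lin_U.
  - exact: bounded_map_comp bS bUK.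
  - exact: bounded_map_comp bU bS.
  - by move=> _ [x ->] /=; rewrite U_colT !row_op_colT UT.
apply: funext => h /=.
by rewrite /W /= -diag_map_single // PU SU //; case: (hP (single k h)).
Qed.

End RowColumn.

Section OperatorIdeals.
Variables (R : realType) (H : lmodType R[i]) (ip : H -> H -> R[i]).
Hypothesis hip : is_inner_product ip.

Lemma bounded_op_id : bounded_op ip id.
Proof. by split=> //; exists 1 => x; rewrite mul1r. Qed.

Lemma bounded_op_comp S T : bounded_op ip S -> bounded_op ip T -> bounded_op ip (S \o T).
Proof.
move=> /bounded_opP [lin_S bS] /bounded_opP [lin_T bT]; apply/bounded_opP.
by split; [move=> a x y /=; rewrite lin_T lin_S | exact: bounded_map_comp bS bT].
Qed.

Lemma bounded_op_opp T : bounded_op ip T -> bounded_op ip (opopp T).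
Proof.
case=> lin_T [M hM]; split; first by move=> a x y; rewrite /opopp lin_T opprD scalerN.
by exists M => x; rewrite /opopp hnorm_opp.
Qed.

Lemma bounded_op_sum n (F : 'I_n -> H -> H) :
  (forall k, bounded_op ip (F k)) -> bounded_op ip (fun x => \sum_k F k x).
Proof.
move=> bF; apply/bounded_opP; split.
  by move=> a x y; rewrite scaler_sumr -big_split; apply: eq_bigr => k _; case: (bF k).
by apply: bounded_map_sum hip _ => k; case/bounded_opP: (bF k).
Qed.

Lemma commutant_antimono (A B : (H -> H) -> Prop) T :
  (forall X, A X -> B X) -> commutant ip B T -> commutant ip A T.
Proof. by move=> AB [bT commT]; split=> // X /AB /commT. Qed.

Lemma left_ideal_sum (A I : (H -> H) -> Prop) n (F : 'I_n -> H -> H) :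
  left_ideal A I -> (forall k, I (F k)) -> I (fun x => \sum_k F k x).
Proof.
case=> _ I0 ID _ _; elim: n F => [|n IHn] F IF.
  have -> : (fun x => \sum_(k < 0) F k x) = @opzero R H by apply: funext => x; rewrite big_ord0.
  exact: I0.
have -> : (fun x => \sum_(k < n.+1) F k x) =
    opadd (fun x => \sum_(k < n) F (widen_ord (leqnSn n) k) x) (F ord_max).
  by apply: funext => x; rewrite /opadd big_ord_recr.
by apply: ID => //; apply: IHn.
Qed.

Definition left_ideal_span (I : (H -> H) -> Prop) (T : H -> H) :=
  exists n (S Tk : 'I_n -> H -> H), [/\ forall k, bounded_op ip (S k),
    forall k, I (Tk k) & forall x, T x = \sum_k S k (Tk k x)].

Lemma left_ideal_span_sub (I : (H -> H) -> Prop) T :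
  bounded_op ip T -> I T -> left_ideal_span I T.
Proof.
move=> bT IT; exists 1%N, (fun _ => id), (fun _ => T).
by split=> // [_|x]; [exact: bounded_op_id | rewrite big_ord1].
Qed.

Lemma left_ideal_span_left_ideal (I : (H -> H) -> Prop) :
  (forall T, I T -> bounded_op ip T) -> left_ideal (bounded_op ip) (left_ideal_span I).
Proof.
move=> bI; split.
- move=> T [n [S [Tk [bS ITk /funext ->]]]].
  by apply: bounded_op_sum => k; apply: bounded_op_comp (bS k) (bI _ (ITk k)).
- exists 0%N, (fun _ => id), (fun _ => @opzero R H).
  by split=> [_|[]//|x]; [exact: bounded_op_id | rewrite big_ord0].
- move=> T1 T2 [n1 [S1 [T1k [bS1 IT1 T1_def]]]] [n2 [S2 [T2k [bS2 IT2 T2_def]]]].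
  pose cat (F1 : 'I_n1 -> H -> H) F2 (i : 'I_(n1 + n2)) :=
    match split i with inl j => F1 j | inr j => F2 j end.
  exists (n1 + n2)%N, (cat S1 S2), (cat T1k T2k).
  split=> [i|i|x]; rewrite /cat; [by case: (split i) | by case: (split i) |].
  rewrite /opadd big_split_ord T1_def T2_def; congr (_ + _); apply: eq_bigr => i _.
    by rewrite (unsplitK (inl i)).
  by rewrite (unsplitK (inr i)).
- move=> T [n [S [Tk [bS ITk T_def]]]].
  exists n, (fun k => opopp (S k)), Tk; split=> // [k|x]; first exact: bounded_op_opp.
  by rewrite /opopp T_def -sumrN.
- move=> S' T bS' [n [S [Tk [bS ITk T_def]]]].
  exists n, (fun k => S' \o S k), Tk; split=> // [k|x]; first exact: bounded_op_comp.
  by case: bS' => lin_S' _; rewrite /= T_def (lin_sum lin_S').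
Qed.

End OperatorIdeals.

Lemma left_ideal_span_meet_vN (R : realType) (H : lmodType R[i]) (ip : H -> H -> R[i])
    (vNA I : (H -> H) -> Prop) T :
  hilbert_space ip -> von_neumann_algebra ip vNA -> left_ideal vNA I ->
  left_ideal_span ip I T -> vNA T -> I T.
Proof.
move=> [hip hc] [bA [_ [_ [_ [_ [adjA bicommA]]]]]] hI [n [S [Tk [bS ITk T_def]]]] vT.
have [IA _ _ _ IM] := hI; have vTk k : vNA (Tk k) := IA _ (ITk k).
have hTk k : bounded_op ip (Tk k) := bA _ (vTk k).
have /choice [A hA] k : exists B, vNA B /\ is_adjoint ip (Tk k) B.
  by have [B vB adjB] := adjA _ (vTk k); exists B.
have [P hP] := projection_exists (ip_ffun_inner hip n) (ip_ffun_complete hip hc)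
  (range_colT_subspace hTk).
have vW k : vNA (W S P k).
  apply/bicommA; apply: commutant_antimono (W_bicommutant hip bS hTk (fun j => (hA j).2) T_def hP k).
  move=> U; apply: commutant_antimono => X [->|[j [->|->]]] //; exact: (hA j).1.
rewrite (funext (fun x => esym (W_sum hip bS hTk T_def hP x))).
by apply: (left_ideal_sum hI) => k; exact: IM (vW k) (ITk k).
Qed.

Theorem corollary3p11 (R : realType) (H : lmodType R[i]) (ip : H -> H -> R[i])
  (hH : hilbert_space ip)
  (vNA : (H -> H) -> Prop) (hvNA : von_neumann_algebra ip vNA)
  (I : (H -> H) -> Prop) (hI : left_ideal vNA I) :
  exists J : (H -> H) -> Prop,
    left_ideal (bounded_op ip) J /\
    (forall T : H -> H, I T <-> (J T /\ vNA T)).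
Proof.
have I_vN T : I T -> vNA T by case: hI => IA _ _ _ _; exact: IA.
exists (left_ideal_span ip I); split.
  by apply: (left_ideal_span_left_ideal hH.1) => T /I_vN /hvNA.1.
move=> T; split=> [IT|[]]; last exact: left_ideal_span_meet_vN.
by split; [apply: left_ideal_span_sub (hvNA.1 _ (I_vN _ IT)) IT | exact: I_vN].
Qed.
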